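(* Let $n\ge 1$ be an integer. (1) If $n$ is odd, let $m=3(n+1)$ and $S=\{1,\dots,\frac{n+1}{2}\}\cup\{\frac{3(n+1)}{2}+1,\dots,2n+1\}$. (2) If $n$ is even, let $m=3n+2$ and $S=\{1,\dots,\frac{n}{2}\}\cup\{\frac{3n+2}{2}+1,\dots,2n+1\}$. In either case let $D_n$ be the mixed graph on vertex set $\mathbb{Z}_m$ whose arcs are $(i,i+s)$ for all $i\in\mathbb{Z}_m$, $s\in S$, and whose edges are $\{i,i+m/2\}$ for all $i\in\mathbb{Z}_m$ (edges joining antipodal vertices). Then $D_n$ is $n$-arc-regular (every vertex is the tail of exactly $n$ arcs and the head of exactly $n$ arcs), $1$-edge-regular, and has girth $4$.
   Context: A mixed graph is a finite simple graph that may contain both edges and arcs. Walks traverse edges in either direction and arcs only in their direction; a cycle is a closed walk with no repeated vertices (other than start = end) and no repeated edge or arc; the girth is the length of a shortest cycle. *)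

From mathcomp Require Import all_boot.
Set Implicit Arguments. Unset Strict Implicit. Unset Printing Implicit Defensive.

(* A mixed graph on a finite vertex type V is given by an arc relation
   A (A u v : there is an arc from u to v) and an edge relation E
   (E u v : there is an (undirected) edge {u,v}; E is intended symmetric). *)

Definition arc_regular (V : finType) (A : rel V) (n : nat) : Prop :=
  forall v : V, #|[set w | A v w]| = n /\ #|[set w | A w v]| = n.

Definition edge_regular (V : finType) (E : rel V) (k : nat) : Prop :=
  forall v : V, #|[set w | E v w]| = k.

(* No arc or edge is used twice: arcs are
   distinct automatically since f is injective; for edges we forbid two
   different steps using the same unordered pair. *)
Definition is_cycle (V : finType) (A E : rel V) (k : nat)
    (f : 'I_k -> V) (b : 'I_k -> bool) : Prop :=
  0 < k /\ injective f /\
  (forall i : 'I_k, if b i then A (f i) (f (ordS i)) else E (f i) (f (ordS i))) /\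
  (forall i j : 'I_k, i != j -> ~~ b i -> ~~ b j ->
       ~ (f i = f (ordS j) /\ f (ordS i) = f j)).

Definition has_girth (V : finType) (A E : rel V) (g : nat) : Prop :=
  (exists (f : 'I_g -> V) (b : 'I_g -> bool), is_cycle A E f b) /\
  (forall k (f : 'I_k -> V) (b : 'I_k -> bool), is_cycle A E f b -> g <= k).

Definition Dm (n : nat) : nat := if odd n then 3 * n.+1 else 3 * n + 2.

Definition DS (n : nat) (s : nat) : bool :=
  if odd n then (1 <= s <= n.+1 %/ 2) || ((3 * n.+1) %/ 2 < s <= 2 * n + 1)
  else (1 <= s <= n %/ 2) || ((3 * n + 2) %/ 2 < s <= 2 * n + 1).

Definition Darc (n : nat) : rel 'I_(Dm n) :=
  fun i j => [exists s : 'I_(Dm n), DS n s && (val j == (i + s) %% Dm n)].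

Definition Dedge (n : nat) : rel 'I_(Dm n) :=
  fun i j => (val j == (i + Dm n %/ 2) %% Dm n) || (val i == (j + Dm n %/ 2) %% Dm n).

(* Vertices are residues mod m; an arc adds an element of S and an edge adds m/2.
   Both degree conditions are then translation invariance plus |S| = n.  A
   closed walk of length k is k such displacements summing to 0 mod m.  S
   consists of [1, a] with a = ceil(n/2) and a segment just above m/2 ending at
   2n + 1, so no single displacement vanishes, two of them sum to m only as
   m/2 + m/2 (one edge traversed back and forth), and three never sum to m or
   2m.  The walk 0, a, 2a, 3a closes up through the edge {3a, 0} when n is odd
   (3a = m/2) and through the arc 3a + 2 when n is even. *)

From mathcomp Require Import all_boot zify.
Set Implicit Arguments. Unset Strict Implicit. Unset Printing Implicit Defensive.

Section Circulant.
Variable m : nat.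
Hypothesis m_gt0 : 0 < m.

Definition shiftm (i : 'I_m) (s : nat) : 'I_m := Ordinal (ltn_pmod (i + s) m_gt0).

Lemma shiftm_inj (i : 'I_m) : injective (fun s : 'I_m => shiftm i s).
Proof.
move=> s t /(congr1 val) /= /eqP; rewrite eqn_modDl !modn_small //.
by move/eqP/val_inj.
Qed.

Lemma addn_subK_mod v s : v < m -> s <= m -> ((v + (m - s)) %% m + s) %% m = v.
Proof. by move=> lt_vm le_sm; rewrite modnDml -addnA subnK // modnDr modn_small. Qed.

Lemma eq_shift_sym (v w : 'I_m) s : s <= m ->
  (val v == (w + s) %% m) = (val w == (v + (m - s)) %% m).
Proof.
move=> le_sm; apply/eqP/eqP => ->; last by rewrite addn_subK_mod.
by rewrite -{1}(subKn le_sm) addn_subK_mod // leq_subr.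
Qed.

Definition circ_arc (S : pred nat) : rel 'I_m :=
  fun i j => [exists s : 'I_m, S s && (val j == (i + s) %% m)].

Lemma circ_arc_out S v :
  [set w | circ_arc S v w] = (fun s : 'I_m => shiftm v s) @: [set s : 'I_m | S s].
Proof.
apply/setP => w; rewrite inE; apply/existsP/imsetP.
- by case=> s /andP [Ss /eqP w_eq]; exists s; [rewrite inE | apply: val_inj].
- by case=> s; rewrite inE => Ss ->; exists s; rewrite Ss /=.
Qed.

Lemma circ_arc_in S v :
  [set w | circ_arc S w v] = (fun s : 'I_m => shiftm v (m - s)) @: [set s : 'I_m | S s].
Proof.
apply/setP => w; rewrite inE; apply/existsP/imsetP.
- case=> s /andP [Ss v_eq]; exists s; first by rewrite inE.
  by apply: val_inj => /=; apply/eqP; rewrite -eq_shift_sym // ltnW.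
- case=> s; rewrite inE => Ss ->; exists s; rewrite Ss /=.
  by rewrite addn_subK_mod // ltnW.
Qed.

Lemma arc_regular_circ S : arc_regular (circ_arc S) #|[set s : 'I_m | S s]|.
Proof.
move=> v; rewrite circ_arc_out circ_arc_in card_imset; last exact: shiftm_inj.
split=> //; rewrite card_imset // => s t /(congr1 val) /= st_eq.
apply: (@shiftm_inj (shiftm v (m - t))); apply: val_inj => /=.
by rewrite -[in LHS]st_eq !addn_subK_mod // ltnW.
Qed.

Hypothesis m_even : ~~ odd m.

Definition antipodal : rel 'I_m :=
  fun i j => (val j == (i + m %/ 2) %% m) || (val i == (j + m %/ 2) %% m).

Lemma antipodal_sym_eq (i j : 'I_m) :
  (val j == (i + m %/ 2) %% m) = (val i == (j + m %/ 2) %% m).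
Proof.
have half : m - m %/ 2 = m %/ 2.
  by rewrite divn2 -{1}(odd_double_half m) (negbTE m_even) add0n -addnn addnK.
by rewrite eq_shift_sym ?leq_div // half.
Qed.

Lemma antipodal_regular : edge_regular antipodal 1.
Proof.
move=> v; rewrite -(cards1 (shiftm v (m %/ 2))); apply: eq_card => w.
by rewrite !inE /antipodal [X in _ || X]antipodal_sym_eq orbb -val_eqE.
Qed.

End Circulant.

Lemma card_ord_pred m (P : pred nat) : #|[set s : 'I_m | P s]| = count P (iota 0 m).
Proof.
rewrite cardsE cardE /enum_mem size_filter -enumT -val_enum_ord count_map.
exact: eq_count.
Qed.

Lemma count_iota_itv a b m : count (fun s => a <= s < b) (iota 0 m) = minn b m - a.
Proof.
elim: m => [|m IH]; first by rewrite minn0.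
by rewrite -addn1 iotaD count_cat IH /=; lia.
Qed.

Lemma Dm_gt0 n : 0 < Dm n.
Proof. rewrite /Dm; case: ifP => _; lia. Qed.

Lemma Dm_even n : ~~ odd (Dm n).
Proof. by rewrite /Dm; case: ifP => odd_n; rewrite (oddD, oddM) /= ?oddM odd_n. Qed.

Lemma card_DS n : #|[set s : 'I_(Dm n) | DS n s]| = n.
Proof.
rewrite card_ord_pred.
set a := if odd n then n.+1 %/ 2 else n %/ 2.
set h := if odd n then 3 * n.+1 %/ 2 else (3 * n + 2) %/ 2.
pose low s := 1 <= s < a.+1; pose high s := h.+1 <= s < (2 * n + 1).+1.
have -> : count (DS n) (iota 0 (Dm n)) = count (predU low high) (iota 0 (Dm n)).
  by apply: eq_count => s; rewrite /DS /low /high /a /h /=; case: (odd n).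
have disjoint_low_high : count (predI low high) (iota 0 (Dm n)) = 0.
  apply/eqP; rewrite -leqn0 leqNgt -has_count; apply/hasPn => s _ /=.
  by rewrite /low /high /a /h; case: (odd n); lia.
move: (count_predUI low high (iota 0 (Dm n))); rewrite disjoint_low_high addn0 => ->.
by rewrite !count_iota_itv /a /h /Dm; case: (boolP (odd n)); lia.
Qed.

(* [Darc n] and [Dedge n] are [circ_arc (DS n)] and [antipodal (Dm n)] by definition. *)
Lemma Darc_regular n : arc_regular (@Darc n) n.
Proof. by have := arc_regular_circ (Dm_gt0 n) (DS n); rewrite card_DS. Qed.

Lemma Dedge_regular n : edge_regular (@Dedge n) 1.
Proof. exact: antipodal_regular (Dm_gt0 n) (Dm_even n). Qed.

Lemma closed_walk_sum m k (f : 'I_k -> 'I_m) (g : 'I_k -> nat) :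
  (forall i, val (f (ordS i)) = (f i + g i) %% m) -> \sum_i g i = 0 %[mod m].
Proof.
case: k f g => [|k] f g step; first by rewrite big_ord0.
have walk j : j <= k -> val (f (inord j)) = (f ord0 + \sum_(i < j) g (inord i)) %% m.
  elim: j => [_|j IH lt_jk].
    rewrite big_ord0 addn0 modn_small // (_ : inord 0 = ord0) //.
    by apply: val_inj; rewrite /= inordK.
  have -> : inord j.+1 = ordS (inord j) :> 'I_k.+1.
    by apply: val_inj; rewrite /= !inordK 1?modn_small // ltnW.
  by rewrite step IH 1?ltnW // modnDml -addnA big_ord_recr.
have last_step : ordS (inord k) = ord0 :> 'I_k.+1.
  by apply: val_inj; rewrite /= inordK // modnn.
have sum_inord : \sum_(i < k.+1) g i = \sum_(i < k) g (inord i) + g (inord k).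
  by rewrite -(eq_bigr _ (fun i _ => congr1 g (inord_val i))) big_ord_recr.
have := step (inord k); rewrite last_step walk // modnDml -addnA -sum_inord => fixed.
by apply/eqP; rewrite -(eqn_modDl (f ord0)) addn0 (modn_small (ltn_ord (f ord0))) -fixed.
Qed.

Lemma modn_eq0_lt3 m x : x < 3 * m -> x = 0 %[mod m] -> [\/ x = 0, x = m | x = 2 * m].
Proof.
rewrite mod0n => lt_x /eqP /dvdnP [q x_eq]; move: lt_x; rewrite {}x_eq.
case: q => [|[|[|q]]] lt_q; [exact: Or31 | exact: Or32 (mul1n m) | exact: Or33 |].
by rewrite ltn_mul2r andbF in lt_q.
Qed.

Definition D_step n (b : bool) (d : nat) : bool :=
  if b then DS n d else d == Dm n %/ 2.

Lemma D_step_of_adj n b (u v : 'I_(Dm n)) :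
  (if b then Darc u v else Dedge u v) -> exists2 d, D_step n b d & val v = (u + d) %% Dm n.
Proof.
case: b => [/existsP [s /andP [Ss /eqP ->]] | uv]; first by exists s.
exists (Dm n %/ 2); first exact: eqxx.
by apply/eqP; move: uv; rewrite /Dedge [X in _ || X](@antipodal_sym_eq _ (Dm_even n)) orbb.
Qed.

Lemma D_step_range n b d : D_step n b d -> 0 < d < Dm n.
Proof. by rewrite /D_step /DS /Dm; case: b; case: (boolP (odd n)); lia. Qed.

Lemma D_step_sum2_edges n b1 b2 d1 d2 :
  D_step n b1 d1 -> D_step n b2 d2 -> d1 + d2 = 0 %[mod Dm n] -> ~~ b1 && ~~ b2.
Proof.
move=> D1 D2; have := D_step_range D1; have := D_step_range D2 => rng2 rng1.
case/modn_eq0_lt3; [lia | lia | | lia].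
by move: D1 D2; rewrite /D_step /DS /Dm; case: b1; case: b2; case: (boolP (odd n)); lia.
Qed.

Lemma D_step_sum3_neq0 n b1 b2 b3 d1 d2 d3 :
  D_step n b1 d1 -> D_step n b2 d2 -> D_step n b3 d3 -> d1 + d2 + d3 = 0 %[mod Dm n] -> False.
Proof.
move=> D1 D2 D3; have := D_step_range D1; have := D_step_range D2; have := D_step_range D3.
move=> rng3 rng2 rng1; case/modn_eq0_lt3; [lia | lia | |].
all: by move: D1 D2 D3; rewrite /D_step /DS /Dm; case: b1; case: b2; case: b3;
  case: (boolP (odd n)); lia.
Qed.

Lemma D_cycle_length_ge4 n k (f : 'I_k -> 'I_(Dm n)) b :
  is_cycle (@Darc n) (@Dedge n) f b -> 4 <= k.
Proof.
case=> k_gt0 [_ [adj edge_once]].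
have [g step walk] := fin_all_exists2 (fun i => D_step_of_adj (adj i)).
have closed := closed_walk_sum walk.
rewrite leqNgt; apply/negP => lt_k4.
case: k k_gt0 lt_k4 f b adj edge_once g step walk closed => [|[|[|[|k]]]] //
  _ _ f b _ edge_once g step _.
- rewrite big_ord1 mod0n; have /andP [g_gt0 /modn_small ->] := D_step_range (step ord0).
  by move=> g_eq0; rewrite g_eq0 in g_gt0.
- rewrite big_ord_recl big_ord1 => /(D_step_sum2_edges (step _) (step _)) /andP [edge0 edge1].
  apply: (edge_once ord0 (lift ord0 ord0)) => //.
  by split; congr f; apply: val_inj.
- rewrite !big_ord_recl big_ord0 addn0 addnA.
  exact: D_step_sum3_neq0 (step _) (step _) (step _).
Qed.

Definition D_square_side n : nat := if odd n then n.+1 %/ 2 else n %/ 2.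

Lemma D_square_vertex_lt n (i : 'I_4) : i * D_square_side n < Dm n.
Proof.
apply: (@leq_ltn_trans (3 * D_square_side n)); first by rewrite leq_mul2r -ltnS ltn_ord orbT.
by rewrite /D_square_side /Dm; case: (boolP (odd n)) => _; lia.
Qed.

Definition D_square n (i : 'I_4) : 'I_(Dm n) := Ordinal (D_square_vertex_lt n i).

Definition D_square_arcs n (i : 'I_4) : bool := ~~ odd n || (val i != 3).

Lemma Darc_of_shift n (u v : 'I_(Dm n)) s :
  DS n s -> val v = (u + s) %% Dm n -> Darc u v.
Proof.
move=> Ss v_eq; have /andP [_ lt_s] := D_step_range (b := true) Ss.
by apply/existsP; exists (Ordinal lt_s); rewrite /= Ss v_eq eqxx.
Qed.

Lemma D_square_cycle n :
  1 <= n -> is_cycle (@Darc n) (@Dedge n) (D_square n) (D_square_arcs n).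
Proof.
move=> n_gt0; have side_gt0 : 0 < D_square_side n.
  by rewrite /D_square_side; case: (boolP (odd n)); lia.
split=> //; split.
  by move=> i j /(congr1 val) /eqP; rewrite /= eqn_pmul2r // => /eqP /val_inj.
split; last first.
  move=> i j /eqP ij; rewrite /D_square_arcs !negb_or !negbK.
  by move=> /andP [_ /eqP i3] /andP [_ /eqP j3]; case: ij; apply: val_inj; rewrite i3 j3.
have side_lt : 3 * D_square_side n < Dm n by rewrite /D_square_side /Dm; case: (boolP (odd n)); lia.
have side_DS : DS n (D_square_side n) by rewrite /DS /D_square_side; case: (boolP (odd n)); lia.
case=> -[|[|[|[|i]]]] lt_i //=; rewrite /D_square_arcs /= ?orbT.
1-3: by apply: (Darc_of_shift side_DS) => /=; rewrite [RHS]modn_small; lia.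
case: (boolP (odd n)) => odd_n /=.
- apply/orP; left; rewrite /= (_ : _ + _ = Dm n) ?modnn //.
  by move: side_lt; rewrite /D_square_side /Dm odd_n /=; lia.
- apply: (@Darc_of_shift _ _ _ (3 * D_square_side n + 2)).
    by rewrite /DS /D_square_side (negbTE odd_n); lia.
  by rewrite /= (_ : _ + _ = Dm n) ?modnn //; rewrite /D_square_side /Dm (negbTE odd_n); lia.
Qed.

Unset Implicit Arguments.

Theorem lemma8 (n : nat) (hn : 1 <= n) :
  arc_regular (@Darc n) n /\ edge_regular (@Dedge n) 1 /\
  has_girth (@Darc n) (@Dedge n) 4.
Proof.
split; first exact: Darc_regular.
split; first exact: Dedge_regular.
split; first by exists (D_square n), (D_square_arcs n); exact: D_square_cycle.
by move=> k f b; exact: D_cycle_length_ge4.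
Qed.
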